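(* Let $(X,d)$ be a metric space and let $U\subseteq F_{USCB}(X)$. Then the following statements are equivalent: (i) $U$ is compact in $(F_{USCB}(X),H_{\rm send})$; (ii) $U$ is closed in $(F_{USCB}(X),H_{\rm send})$, $U(0)=\bigcup_{u\in U}[u]_0$ is relatively compact in $X$, and $U$ is equi-right-continuous at $0$; (iii) $U$ is closed in $(F_{USCB}(X),H_{\rm send})$, $U(0)$ is compact in $X$, and $U$ is equi-right-continuous at $0$.
   Context: A fuzzy set on $X$ is a function $u:X\to[0,1]$, with $\alpha$-cuts $[u]_\alpha=\{x: u(x)\ge\alpha\}$ for $\alpha\in(0,1]$ and $[u]_0=\overline{\{u>0\}}$. $F_{USC}(X)$ is the set of fuzzy sets with all $\alpha$-cuts ($\alpha\in[0,1]$) non-empty and closed; $F_{USCB}(X)=\{u\in F_{USC}(X): [u]_0\text{ is compact}\}$. The Hausdorff distance on non-empty closed subsets of a metric space $(Y,\rho)$ is $H(A,B)=\max\{\sup_{a\in A}\inf_{b\in B}\rho(a,b),\sup_{b\in B}\inf_{a\in A}\rho(a,b)\}$. $X\times[0,1]$ is metrized by $\overline{d}((x,\alpha),(y,\beta))=d(x,y)+|\alpha-\beta|$; ${\rm send}\,u=\{(x,t)\in X\times[0,1]: u(x)\ge t\}\cap([u]_0\times[0,1])$; $H_{\rm send}(u,v)=H({\rm send}\,u,{\rm send}\,v)$ (with $\rho=\overline{d}$). $U\subseteq F_{USC}(X)$ is equi-right-continuous at $0$ if for each $\varepsilon>0$ there is $\delta>0$ such that $H([u]_\delta,[u]_0)<\varepsilon$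 (with $\rho=d$) for all $u\in U$. *)

From mathcomp Require Import all_boot all_order all_algebra.
From mathcomp Require Import all_classical all_reals.
From mathcomp Require Import ereal.
Set Implicit Arguments. Unset Strict Implicit. Unset Printing Implicit Defensive.
Import Order.TTheory GRing.Theory Num.Theory.
Local Open Scope classical_set_scope.
Local Open Scope ring_scope.

Section Defs.
Variable R : realType.

Definition m_open {T : Type} (S : set T) (rho : T -> T -> \bar R) (G : set T) :=
  forall x, S x -> G x -> exists e : R, 0 < e /\
    forall y, S y -> (rho x y < e%:E)%E -> G y.

Definition m_closure {T : Type} (S : set T) (rho : T -> T -> \bar R) (A : set T) :=
  [set x | S x /\ forall e : R, 0 < e -> exists y, A y /\ (rho x y < e%:E)%E].

Definition m_closed {T : Type} (S : set T) (rho : T -> T -> \bar R) (K : set T) :=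
  m_closure S rho K `<=` K.

Definition m_compact {T : Type} (S : set T) (rho : T -> T -> \bar R) (K : set T) :=
  K `<=` S /\
  forall (I : Type) (G : I -> set T), (forall i, m_open S rho (G i)) ->
    K `<=` \bigcup_i G i ->
    exists (n : nat) (f : nat -> I), K `<=` [set x | exists k, (k < n)%N /\ G (f k) x].

Definition m_rel_compact {T : Type} (S : set T) (rho : T -> T -> \bar R) (K : set T) :=
  m_compact S rho (m_closure S rho K).

Definition hausdorff {T : Type} (rho : T -> T -> R) (A B : set T) : \bar R :=
  Order.max
    (ereal_sup [set ereal_inf [set (rho a b)%:E | b in B] | a in A])
    (ereal_sup [set ereal_inf [set (rho a b)%:E | a in A] | b in B]).

Variable X : Type.
Variable d : X -> X -> R.

Definition dE : X -> X -> \bar R := fun x y => (d x y)%:E.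

Definition cut0 (u : X -> R) : set X := m_closure setT dE [set x | 0 < u x].

Definition cut (u : X -> R) (a : R) : set X :=
  if 0 < a then [set x | a <= u x] else cut0 u.

Definition F_USC (u : X -> R) : Prop :=
  (forall x, 0 <= u x <= 1) /\
  forall a : R, 0 <= a <= 1 -> cut u a !=set0 /\ m_closed setT dE (cut u a).

Definition F_USCB (u : X -> R) : Prop := F_USC u /\ m_compact setT dE (cut0 u).

Definition dbar (p q : X * R) : R := d p.1 q.1 + `|p.2 - q.2|.

Definition send (u : X -> R) : set (X * R) :=
  [set p | 0 <= p.2 <= 1 /\ p.2 <= u p.1 /\ cut0 u p.1].

Definition H_send (u v : X -> R) : \bar R := hausdorff dbar (send u) (send v).

Definition U0 (U : set (X -> R)) : set X := \bigcup_(u in U) cut0 u.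

Definition equi_right_cont0 (U : set (X -> R)) : Prop :=
  forall e : R, 0 < e -> exists delta : R, 0 < delta /\
    forall u, U u -> (hausdorff d (cut u delta) (cut0 u) < e%:E)%E.

End Defs.

From mathcomp Require Import all_boot all_order all_algebra.
From mathcomp Require Import all_classical all_reals.
From mathcomp Require Import ereal.
From mathcomp Require Import lra.
Import Order.TTheory GRing.Theory Num.Theory.
Local Open Scope classical_set_scope.
Local Open Scope ring_scope.
Set Implicit Arguments. Unset Strict Implicit. Unset Printing Implicit Defensive.

(* Both compactness notions are handled through sequential compactness, which for an
   extended-real-valued metric is equivalent to open-cover compactness by the
   Lebesgue-number and total-boundedness arguments.

   (i) => (iii): a point of U(0) lies in the 0-cut of some member of U; along an
   H_send-convergent subsequence such points come close to the compact 0-cut of the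
   limit.  A failure of equi-right-continuity at 0 along a convergent subsequence is
   transferred to the limit, contradicting the right-continuity at 0 of a single
   element of F_USCB.

   (ii) => (i): for a sequence in U, a finite net of the closure of U(0) times a finite
   grid of [0,1] admits only finitely many patterns of grid points close to an
   endograph, so pigeonhole and a diagonal argument give an H_send-Cauchy subsequence.
   The upper Kuratowski limit of its endographs is the endograph of some u in F_USCB
   (equi-right-continuity is what makes the 0-level of the limit the closure of its
   positive part), the subsequence converges to u, and closedness puts u in U. *)

Section RealFacts.
Variable R : realType.

Lemma lte_fin_dense (x : \bar R) (e : R) :
  (x < e%:E)%E -> exists2 e', e' < e & (x < e'%:E)%E.
Proof.
case: x => [r| |] //= => [|_]; last by exists (e - 1); rewrite ?ltNyr // ltrBlDr ltrDl.
rewrite lte_fin => re; exists ((r + e) / 2); first by rewrite midf_lt.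
by rewrite lte_fin midf_lt.
Qed.

Lemma invSn_gt0 (k : nat) : 0 < k.+1%:R^-1 :> R.
Proof. by rewrite invr_gt0. Qed.

Lemma invSn_le (n m : nat) : (n <= m)%N -> m.+1%:R^-1 <= n.+1%:R^-1 :> R.
Proof. by move=> nm; rewrite lef_pV2 ?posrE // ler_nat. Qed.

Lemma exists_invSn_lt (e : R) : 0 < e -> exists k : nat, k.+1%:R^-1 < e.
Proof.
move=> e0; exists (Num.truncn e^-1).
by rewrite -[ltRHS]invrK ltf_pV2 ?posrE ?invr_gt0 // truncnS_gt.
Qed.

Lemma exists_pos_le2 (a b : R) : 0 < a -> 0 < b ->
  exists eta, [/\ 0 < eta, eta <= a & eta <= b].
Proof. by move=> a0 b0; have [ab|ba] := lerP a b; [exists a|exists b]; split; lra. Qed.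

Lemma unit_interval_grid (t : R) (k : nat) : 0 <= t <= 1 ->
  exists2 j, (j < k.+2)%N & `|t - j%:R / k.+1%:R| < k.+1%:R^-1.
Proof.
move=> /andP[t0 t1]; have k0 : 0 < k.+1%:R :> R by rewrite ltr0Sn.
have /andP[tk_ge tk_lt] := truncn_itv (mulr_ge0 t0 (ltW k0)).
exists (Num.truncn (t * k.+1%:R)).
  by rewrite ltnS truncn_le_nat (le_lt_trans (y := k.+1%:R)) ?ltr_nat //
    -[leRHS]mul1r ler_pM2r.
set j := Num.truncn _ in tk_ge tk_lt *.
rewrite -[t](mulfK (lt0r_neq0 k0)) -mulrBl normrM ger0_norm ?subr_ge0 //.
rewrite ger0_norm ?invr_ge0 ?ltW // -[ltRHS]mul1r ltr_pM2r ?invr_gt0 //.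
by rewrite -natr1 in tk_lt; lra.
Qed.

End RealFacts.

Definition incr_seq (phi : nat -> nat) := forall n, (phi n < phi n.+1)%N.

Lemma incr_seq_ge phi : incr_seq phi -> forall n, (n <= phi n)%N.
Proof. by move=> hp; elim=> [//|n IH]; exact: leq_ltn_trans IH (hp n). Qed.

Section SequentialCompactness.
Variables (R : realType) (T : Type).
Implicit Types (rho : T -> T -> \bar R) (s : nat -> T) (K : set T).

Definition seq_cvg rho x s :=
  forall e : R, 0 < e -> exists N, forall n, (N <= n)%N -> (rho x (s n) < e%:E)%E.

Definition seq_compact rho K := forall s, (forall n, K (s n)) ->
  exists x phi, [/\ K x, incr_seq phi & seq_cvg rho x (s \o phi)].

Lemma cluster_cvg_subseq rho x s :
  (forall e : R, 0 < e -> forall N, exists2 n, (N <= n)%N & (rho x (s n) < e%:E)%E) ->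
  exists2 phi, incr_seq phi & seq_cvg rho x (s \o phi).
Proof.
move=> hc; have /choice[f hf] : forall p : nat * nat,
    exists n, (p.1 <= n)%N /\ (rho x (s n) < p.2.+1%:R^-1%:E)%E.
  by move=> [N k]; have [n] := hc _ (invSn_gt0 R k) N; exists n.
pose fix phi n := if n is m.+1 then f ((phi m).+1, m.+1) else f (0%N, 0%N).
have phi_close n : (rho x (s (phi n)) < n.+1%:R^-1%:E)%E.
  by case: n => [|n]; [case: (hf (0, 0)%N)|case: (hf ((phi n).+1, n.+1))].
exists phi => [n|e e0]; first by case: (hf ((phi n).+1, n.+1)).
have [k ke] := exists_invSn_lt e0; exists k => n kn.
by apply: (lt_le_trans (phi_close n)); rewrite lee_fin (le_trans (invSn_le _ kn)) ?ltW.
Qed.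

Variables (S : set T) (rho : T -> T -> \bar R).
Hypothesis rho_refl : forall x, S x -> forall e : R, 0 < e -> (rho x x < e%:E)%E.
Hypothesis rho_sym : forall x y (e : R), S x -> S y ->
  (rho x y < e%:E)%E -> (rho y x < e%:E)%E.
Hypothesis rho_tri : forall x y z (a b : R), S x -> S y -> S z ->
  (rho x y < a%:E)%E -> (rho y z < b%:E)%E -> (rho x z < (a + b)%:E)%E.

Lemma m_open_ball x (r : R) : S x -> m_open S rho [set z | (rho x z < r%:E)%E].
Proof.
move=> Sx z Sz /= /lte_fin_dense[r' rr' xz]; exists (r - r'); rewrite subr_gt0.
by split => // w Sw zw; rewrite -(subrKC r' r); exact: rho_tri xz zw.
Qed.

Lemma m_compact_seq_compact K : m_compact S rho K -> seq_compact rho K.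
Proof.
move=> [KS hK] s Ks.
suff [x Kx hx] : exists2 x, K x & forall e : R, 0 < e -> forall N,
    exists2 n, (N <= n)%N & (rho x (s n) < e%:E)%E.
  by have [phi] := cluster_cvg_subseq hx; exists x, phi.
apply: contrapT => nocluster.
(* Balls around points of K that contain no term of s beyond index i.2; finitely many
   of them cannot cover the tail of s. *)
pose G (i : T * R * nat) := [set z | [/\ K i.1.1, 0 < i.1.2,
  (forall n, (i.2 <= n)%N -> ~ (rho i.1.1 (s n) < i.1.2%:E)%E) &
  (rho i.1.1 z < i.1.2%:E)%E]].
have Gopen i : m_open S rho (G i).
  move=> z Sz [Kx e0 far hz].
  have [e [e0' he]] := m_open_ball (KS _ Kx) Sz hz.
  by exists e; split => // w Sw hw; split => //; apply: he.
have Gcover : K `<=` \bigcup_i G i.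
  move=> y Ky; apply: contrapT => hy; apply: nocluster; exists y => // e e0 N.
  apply: contrapT => hne; apply: hy; exists (y, e, N) => //; split => //=.
    by move=> n Nn hr; apply: hne; exists n.
  exact: rho_refl (KS _ Ky) _ e0.
have [m [f hf]] := hK _ G Gopen Gcover.
have [k [km [_ _ far]]] := hf _ (Ks (\max_(k < m) (f k).2)%N).
by apply: far; exact: (leq_bigmax (Ordinal km)).
Qed.

Lemma seq_compact_lebesgue_number K (I : Type) (G : I -> set T) :
  K `<=` S -> seq_compact rho K -> (forall i, m_open S rho (G i)) ->
  K `<=` \bigcup_i G i ->
  exists2 e : R, 0 < e & forall x, K x ->
    exists i, forall z, S z -> (rho x z < e%:E)%E -> G i z.
Proof.
move=> KS hK Gopen Gcover; apply: contrapT => nolebesgue.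
have /choice[xs hxs] : forall k : nat, exists x, K x /\ forall i, ~ (forall z, S z ->
    (rho x z < k.+1%:R^-1%:E)%E -> G i z).
  move=> k; apply: contrapT => hk; apply: nolebesgue; exists k.+1%:R^-1.
    exact: invSn_gt0.
  move=> x Kx; apply: contrapT => hi; apply: hk; exists x; split => // i hG.
  by apply: hi; exists i.
have [y [phi [Ky hphi cvg_y]]] := hK xs (fun n => (hxs n).1).
have [i _ Gy] := Gcover _ Ky.
have [r [r0 hr]] := Gopen i y (KS _ Ky) Gy.
have r20 : 0 < r / 2 by rewrite divr_gt0.
have [k kr] := exists_invSn_lt r20.
have [N hN] := cvg_y _ r20.
pose n := maxn N k; have Sxn := KS _ (hxs (phi n)).1.
apply: ((hxs (phi n)).2 i) => z Sz hz; apply: hr => //; rewrite [r]splitr.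
apply: (rho_tri (KS _ Ky) Sxn Sz); first exact: hN (leq_maxl _ _).
apply: (lt_le_trans hz); rewrite lee_fin (le_trans _ (ltW kr)) // invSn_le //.
exact: leq_trans (leq_maxr N k) (incr_seq_ge hphi n).
Qed.

Lemma exists_separated_seq K (e : R) : K !=set0 ->
  ~ (exists (m : nat) (c : nat -> T), (forall k, (k < m)%N -> K (c k)) /\
      forall x, K x -> exists2 k, (k < m)%N & (rho (c k) x < e%:E)%E) ->
  exists2 xs : nat -> T, (forall n, K (xs n)) &
    forall k n, (k < n)%N -> ~ (rho (xs k) (xs n) < e%:E)%E.
Proof.
move=> [x0 Kx0] nonet.
have /choice[next hnext] : forall p : nat * (nat -> T), exists x,
    (forall k, (k < p.1)%N -> K (p.2 k)) ->
    K x /\ forall k, (k < p.1)%N -> ~ (rho (p.2 k) x < e%:E)%E.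
  move=> [m c] /=.
  have [Kc|] := pselect (forall k, (k < m)%N -> K (c k)); last by exists x0.
  suff [x hx] : exists x, K x /\ forall k, (k < m)%N -> ~ (rho (c k) x < e%:E)%E.
    by exists x.
  apply: contrapT => hx; apply: nonet; exists m, c; split => // x Kx.
  apply: contrapT => hk; apply: hx; exists x; split => // k km hr.
  by apply: hk; exists k.
pose fix prefix n := if n is m.+1 then
  fun k => if k == m then next (m, prefix m) else prefix m k else fun _ => x0.
pose xs n := next (n, prefix n).
have prefixE m k : (k < m)%N -> prefix m k = xs k.
  elim: m => [//|m IH]; rewrite ltnS leq_eqVlt => /orP[/eqP->|km] /=.
    by rewrite eqxx.
  by rewrite (ltn_eqF km) IH.
have prefixK n k : (k < n)%N -> K (prefix n k).
  elim: n k => [//|n IH] k; rewrite ltnS leq_eqVlt => /orP[/eqP->|kn] /=.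
    by rewrite eqxx; case: (hnext (n, prefix n) IH).
  by rewrite (ltn_eqF kn); exact: IH.
exists xs => [n|k n kn]; first by rewrite -(prefixE n.+1) //; exact: prefixK.
by rewrite -(prefixE n k kn); case: (hnext (n, prefix n) (prefixK n)) => _; exact.
Qed.

Lemma seq_compact_finite_net K (e : R) : 0 < e -> K !=set0 -> K `<=` S ->
  seq_compact rho K ->
  exists (m : nat) (c : nat -> T), (forall k, (k < m)%N -> K (c k)) /\
    forall x, K x -> exists2 k, (k < m)%N & (rho (c k) x < e%:E)%E.
Proof.
move=> e0 Kn0 KS hK; apply: contrapT => nonet.
have [xs Kxs sep] := exists_separated_seq Kn0 nonet.
have [y [phi [Ky hphi cvg_y]]] := hK xs Kxs.
have [N hN] := cvg_y _ (divr_gt0 e0 (ltr0Sn _ 1)).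
apply: (sep _ _ (hphi N)); rewrite [e]splitr.
apply: (rho_tri (KS _ (Kxs _)) (KS _ Ky) (KS _ (Kxs _))); last exact: hN.
by apply: rho_sym (KS _ Ky) (KS _ (Kxs _)) _; exact: hN.
Qed.

Lemma seq_compact_m_compact K : K `<=` S -> K !=set0 -> seq_compact rho K ->
  m_compact S rho K.
Proof.
move=> KS Kn0 hK; split => // I G Gopen Gcover.
have [e e0 lebesgue] := seq_compact_lebesgue_number KS hK Gopen Gcover.
have [m [c [Kc net]]] := seq_compact_finite_net e0 Kn0 KS hK.
have [x0 Kx0] := Kn0; have [i0 _ _] := Gcover _ Kx0.
have /choice[g hg] : forall k, exists i, (k < m)%N ->
    forall z, S z -> (rho (c k) z < e%:E)%E -> G i z.
  move=> k; case: (ltnP k m) => km; last by exists i0.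
  by have [i hi] := lebesgue _ (Kc _ km); exists i.
exists m, g => x Kx; have [k km hk] := net _ Kx.
by exists k; split => //; apply: hg => //; apply: KS.
Qed.

Lemma m_compactP K : m_compact S rho K <-> [/\ K `<=` S, K !=set0 & seq_compact rho K].
Proof.
split=> [hK|[]]; last exact: seq_compact_m_compact.
split; [by case: hK| |exact: m_compact_seq_compact].
apply: contrapT => K0; case: hK => _ /(_ False (fun _ => set0)) /=.
have cover : K `<=` \bigcup_(i : False) set0 by move=> x Kx; case: K0; exists x.
by case/(_ (fun i => match i with end) cover) => n [f _]; case: (f 0%N).
Qed.

Hypothesis rho_sep : forall x y, S x -> S y ->
  (forall e : R, 0 < e -> (rho x y < e%:E)%E) -> x = y.

Lemma seq_compact_m_closed K : K `<=` S -> seq_compact rho K -> m_closed S rho K.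
Proof.
move=> KS hK x [Sx hx].
have /choice[ys hys] : forall k : nat, exists y, K y /\ (rho x y < k.+1%:R^-1%:E)%E.
  by move=> k; apply: hx; exact: invSn_gt0.
have [z [phi [Kz hphi cvg_z]]] := hK ys (fun n => (hys n).1).
suff -> : x = z by [].
apply: (rho_sep Sx (KS _ Kz)) => e e0.
have e20 : 0 < e / 2 by rewrite divr_gt0.
have [k ke] := exists_invSn_lt e20.
have [N hN] := cvg_z _ e20.
pose n := maxn N k; have Sy : S (ys (phi n)) by apply: KS; apply: (hys _).1.
rewrite [e]splitr; apply: (rho_tri Sx Sy (KS _ Kz)).
  apply: (lt_le_trans (hys _).2); rewrite lee_fin (le_trans _ (ltW ke)) // invSn_le //.
  exact: leq_trans (leq_maxr N k) (incr_seq_ge hphi n).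
by apply: rho_sym (KS _ Kz) Sy _; apply: hN; exact: leq_maxl.
Qed.

End SequentialCompactness.

Lemma seq_compact_closed_subset (R : realType) (T : Type) (S : set T)
    (rho : T -> T -> \bar R) (K A : set T) :
  K `<=` S -> m_closed S rho A -> A `<=` K -> seq_compact rho K -> seq_compact rho A.
Proof.
move=> KS Aclosed AK hK s As.
have [z [phi [Kz hphi cvg_z]]] := hK s (fun n => AK _ (As n)).
exists z, phi; split => //; apply: Aclosed; split; first exact: KS.
by move=> e e0; have [N hN] := cvg_z e e0; exists (s (phi N)); split => //; apply: hN.
Qed.

Definition inf_often (J : nat -> Prop) := forall N, exists2 n, (N <= n)%N & J n.

Lemma inf_often_pigeonhole (F : finType) (f : nat -> F) (J : nat -> Prop) :
  inf_often J -> exists c, inf_often (fun n => J n /\ f n = c).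
Proof.
move=> hJ; apply: contrapT => nofiber.
have /choice[Nf hNf] : forall c, exists N, forall n, (N <= n)%N -> ~ (J n /\ f n = c).
  move=> c; apply: contrapT => hc; apply: nofiber; exists c => N.
  apply: contrapT => hN; apply: hc; exists N => n Nn hnc; apply: hN; by exists n.
have [n Mn Jn] := hJ (\max_(c : F) Nf c)%N.
by apply: (hNf (f n) n _ (conj Jn erefl)); exact: leq_trans (leq_bigmax (f n)) Mn.
Qed.

Lemma diagonal_subseq (close : nat -> nat -> nat -> Prop) :
  (forall k J, inf_often J -> exists2 J', inf_often J' &
     (forall n, J' n -> J n) /\ forall a b, J' a -> J' b -> close k a b) ->
  exists2 psi, incr_seq psi &
    forall k a b, (k <= a)%N -> (k <= b)%N -> close k (psi a) (psi b).
Proof.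
move=> hrefine.
have /choice[refine hrf] : forall p : nat * (nat -> Prop), exists J',
    inf_often p.2 -> [/\ inf_often J', (forall n, J' n -> p.2 n) &
      forall a b, J' a -> J' b -> close p.1 a b].
  move=> [k J]; have [hJ|] := pselect (inf_often J); last by exists J.
  by have [J' ? []] := hrefine k J hJ; exists J'.
pose fix Js k := if k is k'.+1 then refine (k, Js k') else refine (0%N, fun=> True).
have inf_True : inf_often (fun=> True) by move=> N; exists N.
have Js_inf k : inf_often (Js k).
  elim: k => [|k IH]; first by case: (hrf (0%N, _) inf_True) => + _ _; exact.
  by case: (hrf (k.+1, Js k) IH) => + _ _; exact.
have Js_sub k n : Js k.+1 n -> Js k n.
  by case: (hrf (k.+1, Js k) (Js_inf k)) => _ + _; exact.
have Js_mono k k' n : (k <= k')%N -> Js k' n -> Js k n.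
  move=> kk'; rewrite -(subnK kk'); elim: (k' - k)%N n => [//|i IH] n.
  by rewrite addSn => /Js_sub; exact: IH.
have Js_close k a b : Js k a -> Js k b -> close k a b.
  case: k => [|k]; first by case: (hrf (0%N, _) inf_True) => _ _; exact.
  by case: (hrf (k.+1, Js k) (Js_inf k)) => _ _; exact.
have /choice[pick hpick] : forall p : (nat -> Prop) * nat, exists n,
    inf_often p.1 -> (p.2 <= n)%N /\ p.1 n.
  move=> [J N]; have [hJ|] := pselect (inf_often J); last by exists 0%N.
  by have [n] := hJ N; exists n.
pose fix psi k := if k is k'.+1 then pick (Js k, (psi k').+1) else pick (Js 0, 0%N).
have psi_Js k : Js k (psi k).
  case: k => [|k]; first by case: (hpick (Js 0, 0%N) (Js_inf 0)) => _; exact.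
  by case: (hpick (Js k.+1, (psi k).+1) (Js_inf _)) => _; exact.
exists psi => [k|k a b ka kb].
  by case: (hpick (Js k.+1, (psi k).+1) (Js_inf _)) => + _; exact.
by apply: Js_close; apply: Js_mono (psi_Js _).
Qed.

Section Hausdorff.
Variables (R : realType) (T : Type) (rho : T -> T -> R).
Implicit Types A B : set T.

Lemma hausdorff_lt_near A B (e : R) : (hausdorff rho A B < e%:E)%E ->
  exists2 e', e' < e & (forall a, A a -> exists b, B b /\ rho a b < e') /\
                       (forall b, B b -> exists a, A a /\ rho a b < e').
Proof.
move=> /lte_fin_dense[e' ee']; rewrite /hausdorff gt_max => /andP[AB BA].
exists e' => //; split=> [a Aa|b Bb].
- have /ereal_inf_lt[_ [b Bb <-]] : (ereal_inf [set (rho a b)%:E | b in B] < e'%:E)%E.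
    by apply: le_lt_trans AB; apply: ereal_sup_ubound; exists a.
  by rewrite lte_fin => ?; exists b.
- have /ereal_inf_lt[_ [a Aa <-]] : (ereal_inf [set (rho a b)%:E | a in A] < e'%:E)%E.
    by apply: le_lt_trans BA; apply: ereal_sup_ubound; exists b.
  by rewrite lte_fin => ?; exists a.
Qed.

Lemma hausdorff_le_near A B (e : R) :
  (forall a, A a -> exists b, B b /\ rho a b <= e) ->
  (forall b, B b -> exists a, A a /\ rho a b <= e) ->
  (hausdorff rho A B <= e%:E)%E.
Proof.
move=> AB BA; rewrite /hausdorff ge_max; apply/andP; split.
- apply: ge_ereal_sup => _ [a Aa <-]; have [b [Bb ab]] := AB _ Aa.
  by apply: (@le_trans _ _ (rho a b)%:E); [apply: ereal_inf_lbound; exists b|rewrite lee_fin].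
- apply: ge_ereal_sup => _ [b Bb <-]; have [a [Aa ab]] := BA _ Bb.
  by apply: (@le_trans _ _ (rho a b)%:E); [apply: ereal_inf_lbound; exists a|rewrite lee_fin].
Qed.

Lemma hausdorff_lt_of_near A B (e' e : R) : e' < e ->
  (forall a, A a -> exists b, B b /\ rho a b <= e') ->
  (forall b, B b -> exists a, A a /\ rho a b <= e') ->
  (hausdorff rho A B < e%:E)%E.
Proof. by move=> ee' AB BA; apply: le_lt_trans (hausdorff_le_near AB BA) _. Qed.

End Hausdorff.

Section FuzzySets.
Variables (R : realType) (X : Type) (d : X -> X -> R).
Hypothesis d_ge0 : forall x y, 0 <= d x y.
Hypothesis d_eq0 : forall x y, d x y = 0 <-> x = y.
Hypothesis d_sym : forall x y, d x y = d y x.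
Hypothesis d_tri : forall x y z, d x z <= d x y + d y z.
Implicit Types (u v : X -> R) (A : set X).

Lemma dxx x : d x x = 0. Proof. exact/d_eq0. Qed.

Lemma dE_refl x : setT x -> forall e : R, 0 < e -> (dE d x x < e%:E)%E.
Proof. by move=> _ e e0; rewrite /dE dxx lte_fin. Qed.

Lemma dE_sym x y (e : R) : setT x -> setT y ->
  (dE d x y < e%:E)%E -> (dE d y x < e%:E)%E.
Proof. by rewrite /dE d_sym. Qed.

Lemma dE_tri x y z (a b : R) : setT x -> setT y -> setT z ->
  (dE d x y < a%:E)%E -> (dE d y z < b%:E)%E -> (dE d x z < (a + b)%:E)%E.
Proof. by rewrite /dE !lte_fin => _ _ _ xy yz; exact: le_lt_trans (d_tri x y z) (ltrD xy yz). Qed.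

Lemma dE_sep x y : setT x -> setT y ->
  (forall e : R, 0 < e -> (dE d x y < e%:E)%E) -> x = y.
Proof.
move=> _ _ small; apply/d_eq0/eqP; rewrite eq_le d_ge0 andbT.
by apply/ler_addgt0Pr => e e0; rewrite add0r ltW // -lte_fin small.
Qed.

Lemma sub_m_closure A : A `<=` m_closure setT (dE d) A.
Proof. by move=> x Ax; split => // e e0; exists x; split => //; exact: dE_refl. Qed.

Lemma m_closure_closed A : m_closed setT (dE d) (m_closure setT (dE d) A).
Proof.
move=> x [_ hx]; split => // e e0; have e20 : 0 < e / 2 by rewrite divr_gt0.
have [y [[_ hy] xy]] := hx _ e20; have [z [Az yz]] := hy _ e20.
by exists z; split => //; rewrite [e]splitr; exact: dE_tri xy yz.
Qed.

Lemma m_compactXP A : m_compact setT (dE d) A <-> A !=set0 /\ seq_compact (dE d) A.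
Proof. by rewrite m_compactP; [split=> [[]|[]]|exact: dE_refl|exact: dE_sym|exact: dE_tri]. Qed.

Lemma m_compact_rel_compact A : m_compact setT (dE d) A -> m_rel_compact setT (dE d) A.
Proof.
move=> /m_compactXP[[x Ax] hA]; apply/m_compactXP; split; first by exists x; exact: sub_m_closure.
have Aclosed : m_closed setT (dE d) A.
  by apply: (seq_compact_m_closed dE_sym dE_tri dE_sep).
by apply: (seq_compact_closed_subset _ (@m_closure_closed A) Aclosed hA).
Qed.

Lemma seq_cvg_dE s x : seq_cvg (dE d) x s <->
  forall e : R, 0 < e -> exists N, forall n, (N <= n)%N -> d x (s n) < e.
Proof. by split=> cvg e /cvg[N hN]; exists N => n /hN; rewrite /dE lte_fin. Qed.

Lemma cut_gt0E u a : 0 < a -> cut d u a = [set x | a <= u x].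
Proof. by move=> a0; rewrite /cut a0. Qed.

Lemma cut0E u : cut d u 0 = cut0 d u.
Proof. by rewrite /cut ltxx. Qed.

Lemma gt0_cut0 u x : 0 < u x -> cut0 d u x.
Proof. by move=> ux0; exact: sub_m_closure. Qed.

Lemma cut_sub_cut0 u a : 0 < a -> cut d u a `<=` cut0 d u.
Proof. by move=> a0; rewrite cut_gt0E // => x ax; apply: gt0_cut0; exact: lt_le_trans ax. Qed.

Lemma F_USC_range u x : F_USC d u -> 0 <= u x <= 1.
Proof. by case=> + _; apply. Qed.

Lemma F_USC_cut_closed u (a : R) x : F_USC d u -> 0 < a <= 1 ->
  (forall e : R, 0 < e -> exists y, a <= u y /\ d x y < e) -> a <= u x.
Proof.
move=> [_ hcut] /andP[a0 a1] near_x.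
have [|_ cut_closed] := hcut a; first by rewrite (ltW a0) a1.
suff : cut d u a x by rewrite cut_gt0E.
apply: cut_closed; split => // e /near_x[y [ay xy]].
by exists y; rewrite cut_gt0E // /dE lte_fin.
Qed.

Lemma F_USC_attains1 u : F_USC d u -> exists x, 1 <= u x.
Proof. by case=> _ /(_ 1)[|[x]]; rewrite ?ler01 ?lexx // cut_gt0E //; exists x. Qed.

Lemma F_USC_cut0_neq0 u : F_USC d u -> cut0 d u !=set0.
Proof. by move=> /F_USC_attains1[x x1]; exists x; apply: gt0_cut0; exact: lt_le_trans x1. Qed.

Lemma dbar_refl p : dbar d p p = 0.
Proof. by rewrite /dbar dxx subrr normr0 addr0. Qed.

Lemma dbar_level x y t : dbar d (x, t) (y, t) = d x y.
Proof. by rewrite /dbar subrr normr0 addr0. Qed.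

Lemma dbar_sym p q : dbar d p q = dbar d q p.
Proof. by rewrite /dbar d_sym distrC. Qed.

Lemma dbar_tri p q r : dbar d p r <= dbar d p q + dbar d q r.
Proof. by rewrite /dbar addrACA lerD // (le_trans _ (ler_distD q.2 _ _)) // addrC. Qed.

Lemma d_le_dbar p q : d p.1 q.1 <= dbar d p q.
Proof. by rewrite /dbar lerDl. Qed.

Lemma dist_le_dbar p q : `|p.2 - q.2| <= dbar d p q.
Proof. by rewrite /dbar lerDr. Qed.

Lemma sendP u x t : send d u (x, t) <-> [/\ 0 <= t <= 1, t <= u x & cut0 d u x].
Proof. by split => [[? [? ?]]|[? ? ?]]. Qed.

Lemma H_send_refl u : F_USCB d u -> forall e : R, 0 < e -> (H_send d u u < e%:E)%E.
Proof. by move=> _ e e0; apply: (hausdorff_lt_of_near e0) => p sp; exists p; rewrite dbar_refl. Qed.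

Lemma H_send_sym u v (e : R) : F_USCB d u -> F_USCB d v ->
  (H_send d u v < e%:E)%E -> (H_send d v u < e%:E)%E.
Proof.
move=> _ _ /hausdorff_lt_near[e' ee' [uv vu]]; apply: (hausdorff_lt_of_near ee').
- by move=> p /vu[q [? ?]]; exists q; rewrite dbar_sym ltW.
- by move=> q /uv[p [? ?]]; exists p; rewrite dbar_sym ltW.
Qed.

Lemma H_send_tri u v w (a b : R) : F_USCB d u -> F_USCB d v -> F_USCB d w ->
  (H_send d u v < a%:E)%E -> (H_send d v w < b%:E)%E -> (H_send d u w < (a + b)%:E)%E.
Proof.
move=> _ _ _ /hausdorff_lt_near[a' aa' [uv vu]] /hausdorff_lt_near[b' bb' [vw wv]].
apply: (hausdorff_lt_of_near (ltrD aa' bb')).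
- move=> p /uv[q [sq pq]]; have [r [sr qr]] := vw _ sq.
  by exists r; split => //; apply: le_trans (dbar_tri p q r) _; rewrite ltW ?ltrD.
- move=> r /wv[q [sq qr]]; have [p [sp pq]] := vu _ sq.
  by exists p; split => //; apply: le_trans (dbar_tri p q r) _; rewrite ltW ?ltrD.
Qed.

Lemma H_send_cut0 u v (e : R) : F_USC d u -> (H_send d u v < e%:E)%E ->
  forall x, cut0 d u x -> exists y, cut0 d v y /\ d x y < e.
Proof.
move=> hu /hausdorff_lt_near[e' ee' [uv _]] x ux.
have /uv[[y t] [/sendP[_ _ vy] xy]] : send d u (x, 0).
  by apply/sendP; split; rewrite ?lexx ?ler01 //; case/andP: (F_USC_range x hu).
by exists y; split => //; apply: le_lt_trans (d_le_dbar _ _) (lt_trans xy ee').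
Qed.

Lemma H_send_le u v x : F_USC d u -> F_USC d v ->
  (forall e : R, 0 < e -> (H_send d u v < e%:E)%E) -> u x <= v x.
Proof.
move=> hu hv small; have /andP[v0 _] := F_USC_range x hv.
have /andP[u0 u1] := F_USC_range x hu.
apply/unstable.ler_ltP => a au; have [a0|a0] := lerP a 0; first exact: le_trans a0 v0.
apply: (F_USC_cut_closed hv); first by rewrite a0 (le_trans (ltW au) u1).
move=> e e0; have m0 : 0 < Order.min e (u x - a) by rewrite lt_min e0 subr_gt0 au.
have /hausdorff_lt_near[e' ee' [uv _]] := small _ m0.
have /uv[[y t] [/sendP[_ ty _] xy]] : send d u (x, u x).
  by apply/sendP; split; rewrite ?u0 ?u1 //; apply: gt0_cut0; exact: lt_trans au.
have := lt_trans xy ee'; rewrite lt_min => /andP[xy_e xy_a].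
have := le_lt_trans (dist_le_dbar _ _) xy_a; have := ler_norm (u x - t) => /= ? ?.
by exists y; split; [lra|exact: le_lt_trans (d_le_dbar _ _) xy_e].
Qed.

Lemma H_send_sep u v : F_USCB d u -> F_USCB d v ->
  (forall e : R, 0 < e -> (H_send d u v < e%:E)%E) -> u = v.
Proof.
move=> hu hv small; apply: funext => x; apply/eqP; rewrite eq_le.
rewrite (H_send_le x hu.1 hv.1 small) /=.
by apply: (H_send_le x hv.1 hu.1) => e e0; apply: H_send_sym => //; exact: small.
Qed.

Lemma m_compact_H_sendP U : m_compact (F_USCB d) (H_send d) U <->
  [/\ U `<=` F_USCB d, U !=set0 & seq_compact (H_send d) U].
Proof. by apply: m_compactP; [exact: H_send_refl|exact: H_send_sym|exact: H_send_tri]. Qed.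

Lemma seq_compact_H_send_closed U : U `<=` F_USCB d ->
  seq_compact (H_send d) U -> m_closed (F_USCB d) (H_send d) U.
Proof. by apply: seq_compact_m_closed; [exact: H_send_sym|exact: H_send_tri|exact: H_send_sep]. Qed.

Lemma seq_compact_near_cluster K s : seq_compact (dE d) K ->
  (forall k : nat, exists p : nat * X, [/\ (k <= p.1)%N, K p.2 & d (s p.1) p.2 < k.+1%:R^-1]) ->
  exists z phi, [/\ K z, incr_seq phi & seq_cvg (dE d) z (s \o phi)].
Proof.
move=> hK /choice[ny hny]; pose n k := (ny k).1; pose y k := (ny k).2.
have [z [psi [Kz hpsi /seq_cvg_dE cvg_z]]] := hK y (fun k => let: And3 _ Ky _ := hny k in Ky).
suff [phi ? ?] : exists2 phi, incr_seq phi & seq_cvg (dE d) z (s \o phi) by exists z, phi.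
apply: cluster_cvg_subseq => e e0 M; have e20 : 0 < e / 2 by rewrite divr_gt0.
have [k0 k0e] := exists_invSn_lt e20; have [J hJ] := cvg_z _ e20.
pose j := maxn J (maxn k0 M); have [kn _ sy] := hny (psi j).
have psi_ge k : (k <= maxn k0 M)%N -> (k <= psi j)%N.
  by move=> /leq_trans; apply; apply: leq_trans (leq_maxr _ _) (incr_seq_ge hpsi j).
exists (n (psi j)); first exact: leq_trans (psi_ge _ (leq_maxr _ _)) kn.
rewrite /dE lte_fin (le_lt_trans (d_tri _ (y (psi j)) _)) // [e]splitr ltrD //.
  exact/hJ/leq_maxl.
rewrite d_sym (lt_le_trans sy) // (le_trans _ (ltW k0e)) // invSn_le //.
exact/psi_ge/leq_maxl.
Qed.

Lemma incr_seq_comp phi psi : incr_seq phi -> incr_seq psi -> incr_seq (phi \o psi).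
Proof. by move=> hphi hpsi n; apply: (homo_ltn ltn_trans hphi). Qed.

Lemma seq_compact_U0 U : U `<=` F_USCB d -> seq_compact (H_send d) U ->
  seq_compact (dE d) (U0 d U).
Proof.
move=> UF hU xs hxs.
have /choice[us hus] : forall n, exists u, U u /\ cut0 d u (xs n).
  by move=> n; have [u] := hxs n; exists u.
have [u [phi [Uu hphi cvg_u]]] := hU us (fun n => (hus n).1).
have [_ /m_compactXP[_ cut0_compact]] := UF _ Uu.
have [|z [phi' [uz hphi' cvg_z]]] := seq_compact_near_cluster (s := xs \o phi) cut0_compact.
  move=> k; have [N hN] := cvg_u _ (invSn_gt0 R k); pose n := maxn N k.
  have [|y [uy xy]] := H_send_cut0 (v := u) (e := k.+1%:R^-1) (UF _ (hus (phi n)).1).1 _ (hus _).2.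
    by apply: H_send_sym (UF _ Uu) (UF _ (hus _).1) _; exact/hN/leq_maxl.
  by exists (n, y); split => //; exact: leq_maxr.
by exists z, (phi \o phi'); split; [exists u|exact: incr_seq_comp|].
Qed.

Definition cut0_near_cut u (delta e : R) :=
  forall x, cut0 d u x -> exists y, delta <= u y /\ d x y < e.

Lemma equi_right_cont0P U : equi_right_cont0 d U <->
  forall e : R, 0 < e -> exists2 delta : R, 0 < delta & forall u, U u -> cut0_near_cut u delta e.
Proof.
split=> [erc e e0|near e e0].
  have [delta [delta0 hdelta]] := erc e e0; exists delta => // u Uu x ux.
  have [e' e'e [_ /(_ x ux)[y [yd xy]]]] := hausdorff_lt_near (hdelta u Uu).
  by exists y; move: yd; rewrite cut_gt0E // d_sym => ?; split => //; exact: lt_trans e'e.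
have e20 : 0 < e / 2 by rewrite divr_gt0.
have [delta delta0 hdelta] := near _ e20; exists delta; split => // u Uu.
apply: (@hausdorff_lt_of_near _ _ d _ _ (e / 2)); first lra.
- by move=> x ux; exists x; rewrite dxx; split; [exact: cut_sub_cut0 ux|lra].
- move=> x ux; have [y [yd xy]] := hdelta u Uu x ux.
  by exists y; rewrite cut_gt0E // d_sym; split => //; exact: ltW.
Qed.

Lemma F_USCB_cut0_near_cut u (e : R) : F_USCB d u -> 0 < e ->
  exists2 delta : R, 0 < delta & cut0_near_cut u delta e.
Proof.
move=> [_ /m_compactXP[_ cut0_compact]] e0; apply: contrapT => nodelta.
have /choice[xs hxs] : forall k : nat,
    exists x, cut0 d u x /\ forall y, k.+1%:R^-1 <= u y -> e <= d x y.
  move=> k; apply: contrapT => hk; apply: nodelta; exists k.+1%:R^-1; first exact: invSn_gt0.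
  move=> x ux; apply: contrapT => noy; apply: hk; exists x; split => // y yk.
  by rewrite leNgt; apply/negP => xy; apply: noy; exists y.
have [z [psi [[_ zlim] hpsi /seq_cvg_dE cvg_z]]] := cut0_compact xs (fun k => (hxs k).1).
have e20 : 0 < e / 2 by rewrite divr_gt0.
have [y [/= uy]] := zlim _ e20; rewrite /dE lte_fin => zy.
have [k0 k0u] := exists_invSn_lt uy; have [N hN] := cvg_z _ e20.
pose j := maxn N k0.
have /(hxs (psi j)).2 : (psi j).+1%:R^-1 <= u y.
  by rewrite (le_trans _ (ltW k0u)) // invSn_le // (leq_trans (leq_maxr N k0)) ?incr_seq_ge.
have := d_tri (xs (psi j)) z y; have := hN j (leq_maxl _ _).
by rewrite d_sym /=; lra.
Qed.

Lemma cut0_near_cut_H_send u v (delta e eta : R) : F_USCB d u -> F_USCB d v ->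
  0 < delta -> eta <= e -> eta <= delta / 2 -> cut0_near_cut u delta e ->
  (H_send d u v < eta%:E)%E -> cut0_near_cut v (delta / 2) (3 * e).
Proof.
move=> hu hv delta0 eta_e eta_delta near_u uv x vx.
have [|b [ub xb]] := H_send_cut0 (v := u) (e := eta) hv.1 _ vx; first exact: H_send_sym uv.
have [y [yd yb]] := near_u _ ub.
have [eta' eta'eta [/(_ (y, delta)) near_v _]] := hausdorff_lt_near uv.
have /near_v[[w s] [/sendP[_ sw _] yw]] : send d u (y, delta).
  apply/sendP; split => //; last exact: gt0_cut0 (lt_le_trans delta0 yd).
  by rewrite (ltW delta0) (le_trans yd) //; case/andP: (F_USC_range y hu.1).
exists w; split.
  have := le_lt_trans (dist_le_dbar _ _) yw; have := ler_norm (delta - s) => /= ? ?; lra.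
have := le_lt_trans (d_le_dbar _ _) yw; have := d_tri x b w; have := d_tri b y w.
rewrite /=; lra.
Qed.

Lemma seq_compact_equi_right_cont0 U : U `<=` F_USCB d ->
  seq_compact (H_send d) U -> equi_right_cont0 d U.
Proof.
move=> UF hU; apply/equi_right_cont0P => e e0; apply: contrapT => nodelta.
have /choice[ps hps] : forall k : nat, exists p : (X -> R) * X, [/\ U p.1, cut0 d p.1 p.2 &
    forall y, k.+1%:R^-1 <= p.1 y -> e / 3 <= d p.2 y].
  move=> k; apply: contrapT => hk; apply: nodelta; exists k.+1%:R^-1; first exact: invSn_gt0.
  move=> u Uu x ux; apply: contrapT => noy; apply: hk; exists (u, x); split => // y yk.
  by rewrite leNgt; apply/negP => xy; apply: noy; exists y; split => //; lra.
have [u [phi [Uu hphi cvg_u]]] := hU (fun k => (ps k).1) (fun k => let: And3 h _ _ := hps k in h).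
have e90 : 0 < e / 9 by rewrite divr_gt0.
have [delta delta0 near_u] := F_USCB_cut0_near_cut (UF _ Uu) e90.
have delta20 : 0 < delta / 2 by rewrite divr_gt0.
have [eta [eta0 eta_e eta_delta]] := exists_pos_le2 e90 delta20.
have [N hN] := cvg_u _ eta0; have [k0 k0d] := exists_invSn_lt delta20.
pose m := phi (maxn N k0); have [Um xm far] := hps m.
have near_m := cut0_near_cut_H_send (UF _ Uu) (UF _ Um) delta0 eta_e eta_delta near_u
  (hN _ (leq_maxl _ _)).
have [w [wd xw]] := near_m _ xm.
have mw : m.+1%:R^-1 <= (ps m).1 w.
  rewrite (le_trans _ (ltW (lt_le_trans k0d wd))) // invSn_le //.
  exact: leq_trans (leq_maxr _ _) (incr_seq_ge hphi _).
by have := far w mw; lra.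
Qed.

Section UpperLimit.
Variable U : set (X -> R).
Hypothesis UF : U `<=` F_USCB d.
Let K := m_closure setT (dE d) (U0 d U).
Hypothesis K_compact : seq_compact (dE d) K.
Variable v : nat -> X -> R.
Hypothesis Uv : forall n, U (v n).
Hypothesis v_cauchy : forall e : R, 0 < e -> exists N, forall a b, (N <= a)%N -> (N <= b)%N ->
  forall p, send d (v a) p -> exists q, send d (v b) q /\ dbar d p q < e.

Lemma send_fst_K n p : send d (v n) p -> K p.1.
Proof. by case: p => x t /sendP[_ _ vx]; apply: sub_m_closure; exists (v n). Qed.

Definition send_limsup := [set p : X * R | 0 <= p.2 <= 1 /\ forall e : R, 0 < e ->
  forall N, exists n, (N <= n)%N /\ exists q, send d (v n) q /\ dbar d p q < e].

Lemma send_limsup_closed p : 0 <= p.2 <= 1 ->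
  (forall e : R, 0 < e -> exists p', send_limsup p' /\ dbar d p p' < e) -> send_limsup p.
Proof.
move=> p01 near_p; split => // e e0 N; have e20 : 0 < e / 2 by rewrite divr_gt0.
have [p' [[_ hp'] pp']] := near_p _ e20; have [n [Nn [q [vq p'q]]]] := hp' _ e20 N.
by exists n; split => //; exists q; split => //; have := dbar_tri p p' q; lra.
Qed.

Lemma send_limsup_down x t s : send_limsup (x, t) -> 0 <= s <= t -> send_limsup (x, s).
Proof.
move=> [/andP[t0 t1] near_xt] /andP[s0 st]; split; first by rewrite /= s0 (le_trans st).
move=> e e0 N; have [n [Nn [[y r] [/sendP[/andP[r0 r1] ry vy] xy]]]] := near_xt e e0 N.
exists n; split => //; have [rs|sr] := lerP r s.
- exists (y, r); split; first by apply/sendP; rewrite r0 r1.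
  by move: xy; rewrite /dbar /= !ger0_norm ?subr_ge0 ?(le_trans rs) //; lra.
- exists (y, s); split.
    by apply/sendP; split; rewrite // ?s0 ?(le_trans st t1) ?(le_trans (ltW sr) ry).
  by rewrite dbar_level; exact: le_lt_trans (d_le_dbar (x, t) (y, r)) xy.
Qed.

Lemma send_limsup_fst_K x t : send_limsup (x, t) -> K x.
Proof.
move=> [_ near_xt]; apply: m_closure_closed; split => // e e0.
have [n [_ [[y r] [vy xy]]]] := near_xt e e0 0%N.
exists y; split; first exact: send_fst_K vy.
by rewrite /dE lte_fin; exact: le_lt_trans (d_le_dbar (x, t) (y, r)) xy.
Qed.

Lemma send_limsup_of_subseq (idx : nat -> nat) (qs : nat -> X * R) y s :
  incr_seq idx -> (forall m, send d (v (idx m)) (qs m)) ->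
  seq_cvg (dE d) y (fst \o qs) -> 0 <= s <= 1 -> (forall m, s <= (qs m).2) ->
  send_limsup (y, s).
Proof.
move=> hidx vqs /seq_cvg_dE cvg_y s01 s_le; split => // e e0 N.
have [J hJ] := cvg_y e e0; pose j := maxn J N.
exists (idx j); split; first exact: leq_trans (leq_maxr _ _) (incr_seq_ge hidx j).
have /sendP[_ rz vz] : send d (v (idx j)) ((qs j).1, (qs j).2) by case: (qs j) (vqs j).
exists ((qs j).1, s); rewrite dbar_level; split; last exact/hJ/leq_maxl.
by apply/sendP; split => //; exact: le_trans (s_le j) rz.
Qed.

Lemma send_near_limsup (e : R) : 0 < e -> exists N, forall n, (N <= n)%N ->
  forall p, send d (v n) p -> exists q, send_limsup q /\ dbar d p q < e.
Proof.
move=> e0; have e30 : 0 < e / 3 by rewrite divr_gt0.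
have [N hN] := v_cauchy e30; exists N => n Nn [x t] /[dup] vxt /sendP[/andP[t0 t1] _ _].
have /choice[qs hqs] : forall m, exists q, send d (v (m + N)) q /\ dbar d (x, t) q < e / 3.
  by move=> m; apply: (hN n (m + N) Nn (leq_addl _ _) _ vxt).
have [y [phi [_ hphi cvg_y]]] := K_compact (fun m => send_fst_K (hqs m).1).
have [s [s01 /andP[ts0 ts1] s_le]] : exists s, [/\ 0 <= s <= 1, 0 <= t - s <= e / 3 &
    forall r, t - e / 3 < r -> 0 <= r -> s <= r].
  have [te|et] := lerP t (e / 3); first by exists 0; rewrite lexx ler01 subr0 t0.
  by exists (t - e / 3); split => [| |r /ltW //]; apply/andP; split; lra.
have ys : send_limsup (y, s).
  apply: (send_limsup_of_subseq (idx := fun m => phi m + N) (qs := qs \o phi) _ _ cvg_y) => //.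
  - by move=> m; rewrite ltn_add2r.
  - by move=> m; exact: (hqs (phi m)).1.
  - move=> m /=; case: (qs (phi m)) (hqs (phi m)) => z r [/sendP[/andP[r0 _] _ _] xr].
    apply: s_le r0; have := le_lt_trans (dist_le_dbar (x, t) (z, r)) xr.
    by have := ler_norm (t - r); rewrite /=; lra.
exists (y, s); split => //.
have [J hJ] := (seq_cvg_dE _ _).1 cvg_y _ e30; have /= := hJ J (leqnn _).
case: (qs (phi J)) (hqs (phi J)) => z r /= [_ xr] yz.
move: xr; rewrite /dbar /= [`|t - s|]ger0_norm // => xr.
by have := normr_ge0 (t - r); have := d_tri x z y; have := d_sym z y; lra.
Qed.

Lemma limsup_near_send (e : R) : 0 < e -> exists N, forall n, (N <= n)%N ->
  forall q, send_limsup q -> exists p, send d (v n) p /\ dbar d q p < e.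
Proof.
move=> e0; have e20 : 0 < e / 2 by rewrite divr_gt0.
have [N hN] := v_cauchy e20; exists N => n Nn q [_ near_q].
have [n' [Nn' [p' [vp' qp']]]] := near_q _ e20 N.
have [p [vp p'p]] := hN n' n Nn' Nn p' vp'.
by exists p; split => //; have := dbar_tri q p' p; lra.
Qed.

Lemma send_limsup_top : exists x, send_limsup (x, 1).
Proof.
have /choice[zs zs1] : forall n, exists z, 1 <= v n z.
  by move=> n; exact: F_USC_attains1 (UF (Uv n)).1.
have vz n : send d (v n) (zs n, 1).
  by apply/sendP; rewrite lexx ler01; split => //; apply: gt0_cut0; exact: lt_le_trans (zs1 n).
have [z [phi [_ hphi cvg_z]]] := K_compact (fun n => send_fst_K (vz n)).
exists z; apply: (send_limsup_of_subseq (qs := fun m => (zs (phi m), 1)) hphi _ cvg_z) => //.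
by rewrite ler01 lexx.
Qed.

Hypothesis U_erc : equi_right_cont0 d U.

Lemma send_limsup_bottom x : send_limsup (x, 0) -> forall e : R, 0 < e ->
  exists w s, [/\ send_limsup (w, s), 0 < s & d x w < e].
Proof.
move=> [_ near_x] e e0; have e30 : 0 < e / 3 by rewrite divr_gt0.
have [delta delta0 near_cut] := (equi_right_cont0P U).1 U_erc _ e30.
have [eta [eta0 eta_e eta_delta]] := exists_pos_le2 e30 (divr_gt0 delta0 (ltr0Sn _ 1)).
have [N hN] := send_near_limsup eta0.
have [n [Nn [[y r] [/sendP[_ _ vy] xy]]]] := near_x _ eta0 N.
have [z [zd yz]] := near_cut _ (Uv n) _ vy.
have /(hN n Nn)[[w s] [ws zw]] : send d (v n) (z, delta).
  apply/sendP; split => //; last exact: gt0_cut0 (lt_le_trans delta0 zd).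
  by rewrite (ltW delta0) (le_trans zd) //; case/andP: (F_USC_range z (UF (Uv n)).1).
exists w, s; split => //.
  have := le_lt_trans (dist_le_dbar _ _) zw; have := ler_norm (delta - s) => /= ? ?; lra.
have := le_lt_trans (d_le_dbar _ _) xy; have := le_lt_trans (d_le_dbar _ _) zw.
by have := d_tri x y w; have := d_tri y z w; rewrite /=; lra.
Qed.

Definition lim_fuzzy (x : X) : R := sup [set t | send_limsup (x, t)].

Lemma lim_fuzzy_ub x t : send_limsup (x, t) -> t <= lim_fuzzy x.
Proof.
move=> xt; apply: sup_upper_bound => //; split; first by exists t.
by exists 1 => t' [/andP[_ ?] _].
Qed.

Lemma lim_fuzzy_empty x : ~ (exists t, send_limsup (x, t)) -> lim_fuzzy x = 0.
Proof.
move=> nolevel; rewrite /lim_fuzzy (_ : [set t | _] = set0) ?sup0 //.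
by apply/seteqP; split => t // xt; apply: nolevel; exists t.
Qed.

Lemma lim_fuzzy_range x : 0 <= lim_fuzzy x <= 1.
Proof.
have [[t xt]|] := pselect (exists t, send_limsup (x, t)); last first.
  by move=> /lim_fuzzy_empty->; rewrite lexx ler01.
rewrite (le_trans _ (lim_fuzzy_ub xt)) /=; last by case: xt => /andP[].
by apply: ge_sup; [exists t|move=> t' [/andP[_ ?] _]].
Qed.

Lemma lim_fuzzy_attained x t : send_limsup (x, t) -> send_limsup (x, lim_fuzzy x).
Proof.
move=> xt; apply: send_limsup_closed; first exact: lim_fuzzy_range.
move=> e e0; have [|t' xt' t'e] := sup_adherent e0 (_ : has_sup [set t | send_limsup (x, t)]).
  by split; [exists t|exists 1 => t' [/andP[_ ?] _]].
exists (x, t'); split => //; rewrite /dbar /= dxx add0r ger0_norm ?subr_ge0 ?lim_fuzzy_ub //.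
by rewrite -/(lim_fuzzy x) in t'e; lra.
Qed.

Lemma lim_fuzzy_cut x a : 0 < a -> (a <= lim_fuzzy x <-> send_limsup (x, a)).
Proof.
move=> a0; split; last exact: lim_fuzzy_ub.
have [[t xt] xa|nolevel] := pselect (exists t, send_limsup (x, t)).
  by apply: send_limsup_down (lim_fuzzy_attained xt) _; rewrite (ltW a0).
by rewrite lim_fuzzy_empty // => /(lt_le_trans a0); rewrite ltxx.
Qed.

Lemma lim_fuzzy_cut0 x : cut0 d lim_fuzzy x <-> send_limsup (x, 0).
Proof.
split=> [[_ near_x]|x0].
- apply: send_limsup_closed; first by rewrite /= lexx ler01.
  move=> e /near_x[y [/= y0]]; rewrite /dE lte_fin => xy.
  have [[t yt]|] := pselect (exists t, send_limsup (y, t)); last first.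
    by move=> /lim_fuzzy_empty yE; move: y0; rewrite yE ltxx.
  exists (y, 0); rewrite dbar_level; split => //.
  apply: send_limsup_down (lim_fuzzy_attained yt) _.
  by rewrite lexx; case/andP: (lim_fuzzy_range y).
- split => // e /(send_limsup_bottom x0)[w [s [ws s0 xw]]].
  by exists w; split; [exact: lt_le_trans s0 (lim_fuzzy_ub ws)|rewrite /dE lte_fin].
Qed.

Lemma send_lim_fuzzy : send d lim_fuzzy = send_limsup.
Proof.
apply/seteqP; split => -[x t].
- move=> /sendP[/andP[t0 _] tu /lim_fuzzy_cut0 x0].
  by apply: send_limsup_down (lim_fuzzy_attained x0) _; rewrite t0 tu.
- move=> /[dup] xt [/andP[t0 t1] _]; apply/sendP; split; rewrite ?t0 ?lim_fuzzy_ub //.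
  by apply/lim_fuzzy_cut0; apply: send_limsup_down xt _; rewrite lexx.
Qed.

Lemma lim_fuzzy_F_USCB : F_USCB d lim_fuzzy.
Proof.
have [x1 x1top] := send_limsup_top.
have x1cut0 : cut0 d lim_fuzzy x1.
  by apply/lim_fuzzy_cut0; apply: send_limsup_down x1top _; rewrite lexx ler01.
split; [split|]; first exact: lim_fuzzy_range.
- move=> a /andP[a0 a1]; have [a_gt0|a_le0] := ltrP 0 a; last first.
    have -> : a = 0 by apply/le_anti; rewrite a_le0 a0.
    by rewrite cut0E; split; [exists x1|exact: m_closure_closed].
  rewrite cut_gt0E //; split.
    by exists x1; apply/lim_fuzzy_cut => //; apply: send_limsup_down x1top _; rewrite (ltW a_gt0).
  move=> x [_ near_x] /=; apply/lim_fuzzy_cut => //; apply: send_limsup_closed.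
    by rewrite /= (ltW a_gt0) a1.
  move=> e /near_x[y [/= ya]]; rewrite /dE lte_fin => xy.
  by exists (y, a); rewrite dbar_level; split => //; apply/lim_fuzzy_cut.
- apply/m_compactXP; split; first by exists x1.
  apply: (seq_compact_closed_subset _ (@m_closure_closed _) _ K_compact) => //.
  by move=> x /lim_fuzzy_cut0; exact: send_limsup_fst_K.
Qed.

Lemma seq_cvg_lim_fuzzy : seq_cvg (H_send d) lim_fuzzy v.
Proof.
move=> e e0; have e20 : 0 < e / 2 by rewrite divr_gt0.
have [N1 hN1] := send_near_limsup e20; have [N2 hN2] := limsup_near_send e20.
exists (maxn N1 N2) => n /[dup] /(leq_trans (leq_maxl _ _)) n1 /(leq_trans (leq_maxr _ _)) n2.
rewrite /H_send send_lim_fuzzy; apply: (@hausdorff_lt_of_near _ _ (dbar d) _ _ (e / 2)); first lra.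
- by move=> q /(hN2 n n2)[p [vp qp]]; exists p; rewrite ltW.
- by move=> p /(hN1 n n1)[q [q_lim pq]]; exists q; rewrite dbar_sym ltW.
Qed.

Lemma lim_fuzzy_in_U : m_closed (F_USCB d) (H_send d) U -> U lim_fuzzy.
Proof.
move=> U_closed; apply: U_closed; split; first exact: lim_fuzzy_F_USCB.
by move=> e /seq_cvg_lim_fuzzy[N hN]; exists (v N); split; [exact: Uv|exact: hN].
Qed.

End UpperLimit.

Lemma send_close_refine U (w : nat -> X -> R) (e : R) (J : nat -> Prop) :
  m_rel_compact setT (dE d) (U0 d U) -> (forall n, U (w n)) -> 0 < e -> inf_often J ->
  exists2 J', inf_often J' & (forall n, J' n -> J n) /\ forall a b, J' a -> J' b ->
    forall p, send d (w a) p -> exists q, send d (w b) q /\ dbar d p q < 4 * e.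
Proof.
move=> /m_compactXP[Kn0 K_compact] Uw e0 hJ.
have [m [c [_ net]]] := seq_compact_finite_net dE_sym dE_tri e0 Kn0 (@subsetT _ _) K_compact.
have [k ke] := exists_invSn_lt e0.
pose P (ij : 'I_m * 'I_k.+2) : X * R := (c ij.1, ij.2%:R / k.+1%:R).
pose pattern n : {ffun 'I_m * 'I_k.+2 -> bool} :=
  [ffun ij => `[< exists q, send d (w n) q /\ dbar d (P ij) q < 2 * e >]].
have [c0 hc0] := inf_often_pigeonhole pattern hJ.
exists (fun n => J n /\ pattern n = c0) => //.
split=> [n []//|a b [_ ha] [_ hb] [x t] /[dup] wa_xt /sendP[t01 _ wa_x]].
have [i im ci_x] : exists2 i, (i < m)%N & (dE d (c i) x < e%:E)%E.
  by apply: net; apply: sub_m_closure; exists (w a).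
have [j jk tj] := unit_interval_grid k t01.
pose ij := (Ordinal im, Ordinal jk).
have xt_P : dbar d (x, t) (P ij) < 2 * e.
  by move: ci_x; rewrite /dbar /= d_sym /dE lte_fin; have := lt_trans tj ke; lra.
have : pattern b ij.
  by rewrite hb -ha /pattern ffunE; apply/asboolP; exists (x, t); rewrite dbar_sym.
rewrite /pattern ffunE => /asboolP[q [wb_q Pq]].
by exists q; split => //; have := dbar_tri (x, t) (P ij) q; lra.
Qed.

Lemma H_send_compact_of_rel_compact U : U `<=` F_USCB d ->
  m_closed (F_USCB d) (H_send d) U -> m_rel_compact setT (dE d) (U0 d U) ->
  equi_right_cont0 d U -> m_compact (F_USCB d) (H_send d) U.
Proof.
move=> UF U_closed K_rc U_erc; have [[x0 [_ /(_ 1 ltr01)[y [[u Uu _] _]]]] K_compact] :=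
  (m_compactXP _).1 K_rc.
apply/m_compact_H_sendP; split => //; first by exists u.
move=> w Uw; have [psi hpsi close] := diagonal_subseq
  (close := fun k a b => forall p, send d (w a) p ->
     exists q, send d (w b) q /\ dbar d p q < 4 * k.+1%:R^-1)
  (fun k J => send_close_refine K_rc Uw (invSn_gt0 R k)).
have v_cauchy : forall e : R, 0 < e -> exists N, forall a b, (N <= a)%N -> (N <= b)%N ->
    forall p, send d ((w \o psi) a) p -> exists q, send d ((w \o psi) b) q /\ dbar d p q < e.
  move=> e e0; have e40 : 0 < e / 4 by rewrite divr_gt0.
  have [k ke] := exists_invSn_lt e40.
  exists k => a b ka kb p /(close k a b ka kb)[q [wq pq]]; exists q; split => //.
  by move: pq ke; set i := k.+1%:R^-1; lra.
have Uv n : U ((w \o psi) n) by exact: Uw.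
exists (lim_fuzzy (w \o psi)), psi; split => //.
  exact: (lim_fuzzy_in_U (U := U) UF K_compact Uv v_cauchy U_erc U_closed).
exact: (seq_cvg_lim_fuzzy (U := U) UF K_compact Uv v_cauchy U_erc).
Qed.

Lemma H_send_compact_U0_compact U : U `<=` F_USCB d ->
  m_compact (F_USCB d) (H_send d) U ->
  [/\ m_closed (F_USCB d) (H_send d) U, m_compact setT (dE d) (U0 d U)
    & equi_right_cont0 d U].
Proof.
move=> UF /m_compact_H_sendP[_ [u Uu] U_compact]; split.
- exact: seq_compact_H_send_closed.
- apply/m_compactXP; split; last exact: seq_compact_U0.
  by have [x ux] := F_USC_cut0_neq0 (UF _ Uu).1; exists x, u.
- exact: seq_compact_equi_right_cont0.
Qed.

End FuzzySets.

Unset Implicit Arguments.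

Theorem theorem5p16 (R : realType) (X : Type) (d : X -> X -> R)
  (d_ge0 : forall x y, 0 <= d x y)
  (d_eq0 : forall x y, d x y = 0 <-> x = y)
  (d_sym : forall x y, d x y = d y x)
  (d_tri : forall x y z, d x z <= d x y + d y z)
  (U : set (X -> R)) (hU : U `<=` F_USCB d) :
  (m_compact (F_USCB d) (H_send d) U <->
     [/\ m_closed (F_USCB d) (H_send d) U,
         m_rel_compact setT (dE d) (U0 d U)
       & equi_right_cont0 d U]) /\
  ([/\ m_closed (F_USCB d) (H_send d) U,
       m_rel_compact setT (dE d) (U0 d U)
     & equi_right_cont0 d U] <->
   [/\ m_closed (F_USCB d) (H_send d) U,
       m_compact setT (dE d) (U0 d U)
     & equi_right_cont0 d U]).
Proof.
have i_iii := H_send_compact_U0_compact d_ge0 d_eq0 d_sym d_tri hU.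
have ii_i := H_send_compact_of_rel_compact d_ge0 d_eq0 d_sym d_tri hU.
have iii_ii := @m_compact_rel_compact R X d d_ge0 d_eq0 d_sym d_tri (U0 d U).
split; split.
- by case/i_iii => closed /iii_ii.
- by case=> closed K erc; exact: ii_i.
- by case=> closed K erc; apply: i_iii; exact: ii_i.
- by case=> closed /iii_ii.
Qed.
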